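(* Under the standing assumptions below, let $\pi\in\Pi$ with $\mathbb A^*_\pi>0$, let $\delta>0$, and let $\tilde\pi$ be an optimal solution of the trust-region subproblem $$\max_{\pi'\in\Pi} L_{\pi}(\pi')\quad\text{s.t.}\quad \sum_{s}\rho_{\pi}(s)\,D_{TV}(\pi(\cdot|s)\,\|\,\pi'(\cdot|s))\le\delta.$$ Let $r=\dfrac{\eta(\tilde\pi)-\eta(\pi)}{L_\pi(\tilde\pi)-L_\pi(\pi)}$, $p_0=\min_s\rho_0(s)$ and $\bar A=\max_{s,a}|A_\pi(s,a)|$. Then $$r\ \ge\ \min\left(1-\frac{4\bar A\gamma\delta^2}{p_0^2(1-\gamma)^2\,\mathbb A^*_\pi},\ 1-\frac{4\bar A\gamma\delta}{p_0^2(1-\gamma)^3\,\mathbb A^*_\pi}\right).$$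
   Context: Consider an infinite-horizon discounted Markov decision process $(\mathcal S,\mathcal A,P,r,\rho_0,\gamma)$ with finite state space $\mathcal S$, finite action space $\mathcal A$, transition probabilities $P(s'|s,a)$, bounded reward function $r:\mathcal S\times\mathcal A\to\mathbb R$, initial-state distribution $\rho_0$ with $\rho_0(s)>0$ for all $s\in\mathcal S$, and discount factor $\gamma\in(0,1)$. A policy $\pi$ assigns to each state $s$ a probability distribution $\pi(\cdot|s)$ on $\mathcal A$; $\Pi$ denotes the set of all policies. The total expected reward is $\eta(\pi)=\mathbb E_\pi[\sum_{t=0}^\infty\gamma^t r(s_t,a_t)]$, where $s_0\sim\rho_0$, $a_t\sim\pi(\cdot|s_t)$, $s_{t+1}\sim P(\cdot|s_t,a_t)$. The unnormalized discounted visitation frequency is $\rho_\pi(s)=\sum_{t=0}^\infty\gamma^t\mathbb P(s_t=s\mid\pi)$. $Q_\pi(s,a)=\mathbb E_\pi[\sum_{l\ge0}\gamma^l r(s_l,a_l)\mid s_0=s,a_0=a]$, $V_\pi(s)=\mathbb E_\pi[\sum_{l\ge0}\gamma^l r(s_l,a_l)\mid s_0=s]$, and the advantage is $A_\pi(s,a)=Q_\pi(s,a)-V_\pi(s)$. The surrogate function is $L_\pi(\tilde\pi)=\eta(\pi)+\sum_s\rho_\pi(s)\sum_a\tilde\pi(a|s)A_\pi(s,a)$. The policy advantage of $\pi'$ with respect to $\pi$ is $\mathbb A_\pi(\pi')=\sum_s\rho_\pi(s)\sum_a\pi'(a|s)A_\pi(s,a)$, and $\mathbb A^*_\pi=\max_{\pi'\in\Pi}\mathbb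 A_\pi(\pi')$. The total variation distance is $D_{TV}(p\|q)=\frac12\sum_x|p(x)-q(x)|$. *)

From Stdlib Require Import Reals ClassicalEpsilon.
From mathcomp Require Import all_boot.
Set Implicit Arguments.
Unset Strict Implicit.

Local Open Scope R_scope.

Definition rsum {T : finType} (F : T -> R) : R :=
  \big[Rplus/R0]_(x : T) F x.

(* Value of a series sum_{t>=0} u t (chosen via classical choice; meaningful
   when the series converges, which is always the case below). *)
Definition series_sum (u : nat -> R) : R :=
  epsilon (inhabits R0)
    (fun l => Un_cv (fun N => sum_f_R0 u N) l).

Section MDP.
Variables (S A : finType).
Variable P : S -> A -> S -> R.      (* P s a s' = P(s'|s,a) *)
Variable rw : S -> A -> R.
Variable rho0 : S -> R.
Variable gamma : R.

Definition valid_mdp : Prop :=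
  (forall s a s', 0 <= P s a s') /\
  (forall s a, rsum (fun s' => P s a s') = 1) /\
  (forall s, 0 < rho0 s) /\ rsum rho0 = 1 /\
  (exists B, forall s a, Rabs (rw s a) <= B) /\
  0 < gamma < 1.

(* A policy: pi s a = pi(a|s). *)
Definition is_policy (pi : S -> A -> R) : Prop :=
  (forall s a, 0 <= pi s a) /\ (forall s, rsum (fun a => pi s a) = 1).

(* Joint law of (s_t, a_t) under pi, starting from the law nu of (s_0, a_0). *)
Fixpoint sa_dist (pi : S -> A -> R) (nu : S -> A -> R) (t : nat) : S -> A -> R :=
  match t with
  | O => nu
  | t'.+1 => fun s' a' =>
      rsum (fun s => rsum (fun a => sa_dist pi nu t' s a * P s a s')) * pi s' a'
  end.

Definition disc_return (pi : S -> A -> R) (nu : S -> A -> R) : R :=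
  series_sum (fun t => gamma ^ t *
    rsum (fun s => rsum (fun a => sa_dist pi nu t s a * rw s a))).

Definition eta (pi : S -> A -> R) : R :=
  disc_return pi (fun s a => rho0 s * pi s a).

(* Unnormalized discounted visitation frequency. *)
Definition rho (pi : S -> A -> R) (s : S) : R :=
  series_sum (fun t => gamma ^ t *
    rsum (fun a => sa_dist pi (fun s0 a0 => rho0 s0 * pi s0 a0) t s a)).

Definition Qf (pi : S -> A -> R) (s : S) (a : A) : R :=
  disc_return pi (fun s0 a0 => if (s0 == s) && (a0 == a) then 1 else 0).

Definition Vf (pi : S -> A -> R) (s : S) : R :=
  disc_return pi (fun s0 a0 => if s0 == s then pi s a0 else 0).

Definition Adv (pi : S -> A -> R) (s : S) (a : A) : R := Qf pi s a - Vf pi s.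

Definition surrogate (pi pi' : S -> A -> R) : R :=
  eta pi + rsum (fun s => rho pi s * rsum (fun a => pi' s a * Adv pi s a)).

Definition policy_adv (pi pi' : S -> A -> R) : R :=
  rsum (fun s => rho pi s * rsum (fun a => pi' s a * Adv pi s a)).

Definition dTV (p q : A -> R) : R := / 2 * rsum (fun a => Rabs (p a - q a)).

Definition exp_tv (pi pi' : S -> A -> R) : R :=
  rsum (fun s => rho pi s * dTV (pi s) (pi' s)).

End MDP.

(* Write [D = L_pi(pit) - L_pi(pi) = sum_s rho_pi(s) B_s] with
   [B_s = sum_a pit(a|s) A_pi(s,a)].  Mixing [pi] with a maximiser of the
   policy advantage in proportion [t = min(1, delta (1 - gamma))] gives a
   feasible policy (the total mass of [rho_pi] is [1/(1-gamma)]), so optimality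
   of [pit] yields [D >= t A*].  By the performance-difference lemma
   [eta(pit) - eta(pi) = sum_s rho_pit(s) B_s], so the numerator differs from
   [D] by [sum_s (rho_pit - rho_pi)(s) B_s].  Since [sum_a pi A_pi = 0],
   [|B_s| <= 2 Abar D_TV(pi_s, pit_s)], and [p0 <= rho_pi(s)] together with the
   trust-region constraint bounds this by [2 Abar delta / p0]; the flow equation
   for the visitation frequencies gives
   [(1-gamma) |rho_pit - rho_pi|_1 <= 2 gamma delta].  Dividing by [D] and
   using the two cases of [t] gives the two branches of the minimum. *)
From HB Require Import structures.
From Stdlib Require Import Reals Lra FunctionalExtensionality ClassicalEpsilon.
From mathcomp Require Import all_boot.
Set Implicit Arguments.
Unset Strict Implicit.
Local Open Scope R_scope.

HB.instance Definition _ :=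
  Monoid.isComLaw.Build R R0 Rplus (fun x y z => esym (Rplus_assoc x y z)) Rplus_comm Rplus_0_l.

Section FiniteSums.
Variable T : finType.
Implicit Types f g : T -> R.

Lemma eq_rsum f g : (forall x, f x = g x) -> rsum f = rsum g.
Proof. by move=> H; apply: eq_bigr => x _; exact: H. Qed.

Lemma rsumD f g : rsum (fun x => f x + g x) = rsum f + rsum g.
Proof. exact: big_split. Qed.

Lemma rsumZ (c : R) f : rsum (fun x => c * f x) = c * rsum f.
Proof.
rewrite /rsum; apply: (big_rec2 (fun y1 y2 => y1 = c * y2)); first by ring.
by move=> i y1 y2 _ ->; ring.
Qed.

Lemma rsumZr (c : R) f : rsum (fun x => f x * c) = rsum f * c.
Proof. by rewrite -(Rmult_comm c) -rsumZ; apply: eq_rsum => x; ring. Qed.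

Lemma rsumN f : rsum (fun x => - f x) = - rsum f.
Proof.
have -> : - rsum f = -1 * rsum f by ring.
by rewrite -rsumZ; apply: eq_rsum => x; ring.
Qed.

Lemma rsumB f g : rsum (fun x => f x - g x) = rsum f - rsum g.
Proof. by rewrite /Rminus -rsumN -rsumD. Qed.

Lemma rsum0 : rsum (fun _ : T => 0) = 0.
Proof. exact: big1. Qed.

Lemma ler_rsum f g : (forall x, f x <= g x) -> rsum f <= rsum g.
Proof.
move=> H; apply: (big_rec2 (fun y1 y2 => y1 <= y2)); first lra.
by move=> i y1 y2 _ Hy; have := H i; lra.
Qed.

Lemma rsum_ge0 f : (forall x, 0 <= f x) -> 0 <= rsum f.
Proof. by move=> H; rewrite -rsum0; exact: ler_rsum. Qed.

Lemma ler_abs_rsum f : Rabs (rsum f) <= rsum (fun x => Rabs (f x)).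
Proof.
apply: (big_rec2 (fun y1 y2 => Rabs y1 <= y2)); first by rewrite Rabs_R0; lra.
by move=> i y1 y2 _ Hy; have := Rabs_triang (f i) y1; lra.
Qed.

Lemma ler_term_rsum f x0 : (forall x, 0 <= f x) -> f x0 <= rsum f.
Proof.
move=> H; rewrite /rsum (bigD1 x0) //=.
suff : 0 <= \big[Rplus/R0]_(i | i != x0) f i by lra.
by apply: (big_rec (fun y => 0 <= y)); [lra | move=> i y _ Hy; have := H i; lra].
Qed.

Lemma rsum_pred1 f y : rsum (fun x => if x == y then f x else 0) = f y.
Proof. by rewrite /rsum (bigD1 y) //= eqxx big1 ?Rplus_0_r // => i /negbTE ->. Qed.

Lemma rsum_indicator f y : rsum (fun x => (if x == y then 1 else 0) * f x) = f y.
Proof. by rewrite -(rsum_pred1 f y); apply: eq_rsum => x; case: (x == y); ring. Qed.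

End FiniteSums.

Lemma exchange_rsum (T U : finType) (F : T -> U -> R) :
  rsum (fun x => rsum (fun y => F x y)) = rsum (fun y => rsum (fun x => F x y)).
Proof. exact: exchange_big. Qed.

Lemma ler_abs_rsum2 (T U : finType) (F : T -> U -> R) x y :
  Rabs (F x y) <= rsum (fun x => rsum (fun y => Rabs (F x y))).
Proof.
apply: Rle_trans; first exact: (@ler_term_rsum _ (fun y => Rabs (F x y)) y (fun y => Rabs_pos _)).
apply: (@ler_term_rsum _ (fun x => rsum (fun y => Rabs (F x y)))) => x'.
by apply: rsum_ge0 => y'; exact: Rabs_pos.
Qed.

Lemma rsum2_linear (T U I : finType) (c : I -> R) (F : I -> T -> U -> R) (f : T -> U -> R) :
  rsum (fun x => rsum (fun y => rsum (fun i => c i * F i x y) * f x y)) =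
  rsum (fun i => c i * rsum (fun x => rsum (fun y => F i x y * f x y))).
Proof.
rewrite (eq_rsum (g := fun x => rsum (fun i => rsum (fun y => c i * (F i x y * f x y))))).
  rewrite exchange_rsum; apply: eq_rsum => i; rewrite -rsumZ.
  by apply: eq_rsum => x; rewrite rsumZ.
move=> x; rewrite -exchange_rsum; apply: eq_rsum => y.
by rewrite -rsumZr; apply: eq_rsum => i; ring.
Qed.

Lemma rsum2_indicator (T U : finType) (F : T -> U -> R) x y :
  rsum (fun x' => rsum (fun y' => (if (x' == x) && (y' == y) then 1 else 0) * F x' y')) = F x y.
Proof.
rewrite -(rsum_pred1 (fun x' => F x' y) x); apply: eq_rsum => x'.
case: (x' == x) => /=; first exact: rsum_indicator.
by rewrite (eq_rsum (g := fun _ => 0)) ?rsum0 // => y'; ring.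
Qed.

Lemma dTV_ge0 (A : finType) (p q : A -> R) : 0 <= dTV p q.
Proof. by apply: Rmult_le_pos; [lra | apply: rsum_ge0 => a; exact: Rabs_pos]. Qed.

Lemma dTV_le1 (A : finType) (p q : A -> R) : (forall a, 0 <= p a) -> (forall a, 0 <= q a) ->
  rsum p = 1 -> rsum q = 1 -> dTV p q <= 1.
Proof.
move=> Hp Hq H1 H2; rewrite /dTV.
have : rsum (fun a => Rabs (p a - q a)) <= rsum (fun a => p a + q a).
  by apply: ler_rsum => a; have := Hp a; have := Hq a; move=> h1 h2; apply: Rabs_le; lra.
by rewrite rsumD H1 H2 => h; lra.
Qed.

Lemma dTV_sym (A : finType) (p q : A -> R) :
  rsum (fun a => Rabs (q a - p a)) = 2 * dTV p q.
Proof. by rewrite /dTV (eq_rsum (fun a => Rabs_minus_sym (q a) (p a))); field. Qed.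

Lemma abs_rsum_centered_le (A : finType) (p q f : A -> R) (M : R) :
  rsum (fun a => p a * f a) = 0 -> (forall a, Rabs (f a) <= M) ->
  Rabs (rsum (fun a => q a * f a)) <= 2 * M * dTV p q.
Proof.
move=> Hp0 HM.
have -> : rsum (fun a => q a * f a) = rsum (fun a => (q a - p a) * f a).
  rewrite (@eq_rsum _ (fun a => (q a - p a) * f a) (fun a => q a * f a - p a * f a)).
    by rewrite rsumB Hp0; ring.
  by move=> a; ring.
apply: Rle_trans (ler_abs_rsum _) _.
rewrite Rmult_assoc (Rmult_comm M) -Rmult_assoc -dTV_sym -rsumZr.
apply: ler_rsum => a; rewrite Rabs_mult.
by apply: Rmult_le_compat_l; [exact: Rabs_pos | exact: HM].
Qed.

Lemma series_sum_eq (u : nat -> R) (l : R) : Un_cv (sum_f_R0 u) l -> series_sum u = l.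
Proof.
move=> H; have Hex : exists l, Un_cv (fun N => sum_f_R0 u N) l by exists l.
exact: UL_sequence (epsilon_spec (inhabits R0) _ Hex) H.
Qed.

Lemma Un_cv_ext (u v : nat -> R) (l : R) : (forall n, u n = v n) -> Un_cv u l -> Un_cv v l.
Proof. by move=> E H eps He; case: (H eps He) => N HN; exists N => n Hn; rewrite -E; exact: HN. Qed.

Lemma Un_cv_const (c : R) : Un_cv (fun _ => c) c.
Proof. by move=> eps He; exists O => n _; rewrite /Rdist Rminus_diag Rabs_R0. Qed.

Lemma Un_cv_scal (c : R) (u : nat -> R) (l : R) : Un_cv u l -> Un_cv (fun n => c * u n) (c * l).
Proof. exact: CV_mult (Un_cv_const c). Qed.

Lemma sum_f_R0_scal (c : R) (u : nat -> R) N : sum_f_R0 (fun t => c * u t) N = c * sum_f_R0 u N.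
Proof. by rewrite scal_sum; apply: PartSum.sum_eq => i _; ring. Qed.

Lemma Un_cv_geometric (g : R) : 0 <= g < 1 -> Un_cv (sum_f_R0 (fun t => g ^ t)) (/ (1 - g)).
Proof.
move=> Hg; have Ha : Rabs g < 1 by rewrite Rabs_right; lra.
apply: Un_cv_ext (GP_infinite g Ha) => n.
by apply: PartSum.sum_eq => i _; ring.
Qed.

Section GeometricallyDominatedSeries.
Variables (g : R) (C : R) (u : nat -> R).
Hypothesis Hg : 0 <= g < 1.
Hypothesis Hu : forall t, Rabs (u t) <= C * g ^ t.

(* Comparison with [2 C g^t] applies to the nonnegative series [u t + C g^t]. *)
Lemma series_sum_cv : Un_cv (sum_f_R0 u) (series_sum u).
Proof.
suff [l Hl] : exists l, Un_cv (sum_f_R0 u) l by rewrite (series_sum_eq Hl).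
have Hgeo : Un_cv (sum_f_R0 (fun t => C * g ^ t)) (C * / (1 - g)).
  by apply: Un_cv_ext (Un_cv_scal C (Un_cv_geometric Hg)) => n; rewrite sum_f_R0_scal.
have Hgeo2 : Un_cv (sum_f_R0 (fun t => 2 * (C * g ^ t))) (2 * (C * / (1 - g))).
  by apply: Un_cv_ext (Un_cv_scal 2 Hgeo) => n; rewrite (sum_f_R0_scal 2 (fun t => C * g ^ t)).
have Hb : forall n, 0 <= u n + C * g ^ n <= 2 * (C * g ^ n).
  move=> n; have := Hu n; have := Rle_abs (u n); have := Rle_abs (- u n).
  by rewrite Rabs_Ropp; lra.
have [l1 Hl1] := Rseries_CV_comp _ _ Hb (exist _ _ Hgeo2).
exists (l1 - C * / (1 - g)); apply: Un_cv_ext (CV_minus _ _ _ _ Hl1 Hgeo) => n.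
by rewrite -minus_sum; apply: PartSum.sum_eq => i _; ring.
Qed.

Lemma series_sumZ (c : R) : series_sum (fun t => c * u t) = c * series_sum u.
Proof.
apply: series_sum_eq; apply: Un_cv_ext (Un_cv_scal c series_sum_cv) => n.
by rewrite sum_f_R0_scal.
Qed.

Lemma series_sumZr (c : R) : series_sum (fun t => u t * c) = series_sum u * c.
Proof.
rewrite Rmult_comm -series_sumZ; congr series_sum.
by apply: functional_extensionality => t; ring.
Qed.

Lemma series_sum_shift : series_sum u = u O + series_sum (fun t => u (S t)).
Proof.
have Hshift : Un_cv (sum_f_R0 (fun t => u (S t))) (series_sum u - u O).
  apply: Un_cv_ext (CV_minus _ _ _ _ (CV_shift' _ 1 _ series_sum_cv) (Un_cv_const (u O))) => n.
  by rewrite Nat.add_1_r decomp_sum ?Nat.pred_succ; [ring | exact: Nat.lt_0_succ].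
by rewrite (series_sum_eq Hshift); ring.
Qed.

End GeometricallyDominatedSeries.

Lemma series_sum_rsum (T : finType) (g : R) (C : T -> R) (u : T -> nat -> R) : 0 <= g < 1 ->
  (forall i t, Rabs (u i t) <= C i * g ^ t) ->
  series_sum (fun t => rsum (fun i => u i t)) = rsum (fun i => series_sum (u i)).
Proof.
move=> Hg Hu; apply: series_sum_eq.
have Hcv : forall i, Un_cv (sum_f_R0 (u i)) (series_sum (u i)).
  by move=> i; exact: series_sum_cv Hg (Hu i).
have Hsum : forall N, sum_f_R0 (fun t => rsum (fun i => u i t)) N = rsum (fun i => sum_f_R0 (u i) N).
  by elim=> [|N IH] //=; rewrite IH -rsumD.
apply: Un_cv_ext (fun N => esym (Hsum N)) _; rewrite /rsum.
elim: (index_enum T) => [|x r IH].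
  by rewrite [in X in Un_cv _ X]big_nil; apply: Un_cv_ext (Un_cv_const _) => n; rewrite big_nil.
rewrite [in X in Un_cv _ X]big_cons.
by apply: Un_cv_ext (CV_plus _ _ _ _ (Hcv x) IH) => n; rewrite big_cons.
Qed.

Definition stochastic (S A : finType) (P : S -> A -> S -> R) : Prop :=
  (forall s a s', 0 <= P s a s') /\ (forall s a, rsum (fun s' => P s a s') = 1).

Definition mass (S A : finType) (nu : S -> A -> R) : R :=
  rsum (fun s => rsum (fun a => Rabs (nu s a))).

Section Occupancy.
Variables (S A : finType) (P : S -> A -> S -> R) (g : R).
Hypothesis HP : stochastic P.
Hypothesis Hg : 0 <= g < 1.

Definition occupancy (pi : S -> A -> R) (nu : S -> A -> R) (s : S) (a : A) : R :=
  series_sum (fun t => g ^ t * sa_dist P pi nu t s a).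

Lemma rsum_policy (pi : S -> A -> R) (X : S -> R) : is_policy pi ->
  rsum (fun s => rsum (fun a => X s * pi s a)) = rsum X.
Proof. by move=> [_ H1]; apply: eq_rsum => s; rewrite rsumZ H1; ring. Qed.

Lemma rsum_transition (G : S -> A -> R) :
  rsum (fun s' => rsum (fun s => rsum (fun a => G s a * P s a s'))) =
  rsum (fun s => rsum (fun a => G s a)).
Proof.
have [_ H1] := HP; rewrite exchange_rsum; apply: eq_rsum => s; rewrite exchange_rsum.
by apply: eq_rsum => a; rewrite rsumZ H1; ring.
Qed.

Lemma sa_dist_ge0 pi (nu : S -> A -> R) t s a : is_policy pi ->
  (forall s a, 0 <= nu s a) -> 0 <= sa_dist P pi nu t s a.
Proof.
move=> [Hpi _] Hnu; have [HP0 _] := HP; elim: t s a => [|t IH] s' a' /=; first exact: Hnu.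
apply: Rmult_le_pos; last exact: Hpi.
by apply: rsum_ge0 => s; apply: rsum_ge0 => a; apply: Rmult_le_pos; [exact: IH | exact: HP0].
Qed.

Lemma mass_sa_dist_succ pi (nu : S -> A -> R) t : is_policy pi ->
  mass (sa_dist P pi nu t.+1) <= mass (sa_dist P pi nu t).
Proof.
move=> Hpi; have [Hpi0 _] := Hpi; have [HP0 _] := HP; rewrite /mass /=.
set m := sa_dist P pi nu t.
apply: Rle_trans (_ : _ <= rsum (fun s' => rsum (fun a' =>
    rsum (fun s => rsum (fun a => Rabs (m s a) * P s a s')) * pi s' a'))) _.
  apply: ler_rsum => s'; apply: ler_rsum => a'.
  rewrite Rabs_mult (Rabs_pos_eq (pi s' a')) //; apply: Rmult_le_compat_r => //.
  apply: Rle_trans (ler_abs_rsum _) _; apply: ler_rsum => s.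
  apply: Rle_trans (ler_abs_rsum _) _; apply: ler_rsum => a.
  by rewrite Rabs_mult (Rabs_pos_eq (P s a s')) //; exact: Rle_refl.
by rewrite (rsum_policy _ Hpi) rsum_transition; exact: Rle_refl.
Qed.

Lemma abs_sa_dist_le pi (nu : S -> A -> R) t s a : is_policy pi ->
  Rabs (sa_dist P pi nu t s a) <= mass nu.
Proof.
move=> Hpi; apply: Rle_trans (ler_abs_rsum2 _ s a) _.
elim: t => [|t IH]; first exact: Rle_refl.
exact: Rle_trans (mass_sa_dist_succ nu t Hpi) IH.
Qed.

Lemma sa_dist_dominated_by pi (nu : S -> A -> R) (c : R) t s a : is_policy pi ->
  Rabs (g ^ t * sa_dist P pi nu t s a * c) <= (mass nu * Rabs c) * g ^ t.
Proof.
move=> Hpi; have Hgt : 0 <= g ^ t by apply: pow_le; lra.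
rewrite !Rabs_mult (Rabs_pos_eq _ Hgt).
have : Rabs (sa_dist P pi nu t s a) * Rabs c <= mass nu * Rabs c.
  by apply: Rmult_le_compat_r; [exact: Rabs_pos | exact: abs_sa_dist_le].
by nra.
Qed.

Lemma sa_dist_dominated pi (nu : S -> A -> R) t s a : is_policy pi ->
  Rabs (g ^ t * sa_dist P pi nu t s a) <= mass nu * g ^ t.
Proof. by move/(sa_dist_dominated_by nu 1 t s a); rewrite Rabs_R1 !Rmult_1_r. Qed.

Lemma rsum_sa_dist_dominated pi (nu : S -> A -> R) (c : A -> R) t s : is_policy pi ->
  Rabs (rsum (fun a => g ^ t * sa_dist P pi nu t s a * c a)) <=
  rsum (fun a => mass nu * Rabs (c a)) * g ^ t.
Proof.
move=> Hpi; apply: Rle_trans (ler_abs_rsum _) _.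
by rewrite -rsumZr; apply: ler_rsum => a; exact: sa_dist_dominated_by.
Qed.

Lemma rsum2_sa_dist_dominated pi (nu : S -> A -> R) (c : S -> A -> R) t : is_policy pi ->
  Rabs (rsum (fun s => rsum (fun a => g ^ t * sa_dist P pi nu t s a * c s a))) <=
  rsum (fun s => rsum (fun a => mass nu * Rabs (c s a))) * g ^ t.
Proof.
move=> Hpi; apply: Rle_trans (ler_abs_rsum _) _.
by rewrite -rsumZr; apply: ler_rsum => s; exact: rsum_sa_dist_dominated.
Qed.

Lemma disc_return_occupancy (rw : S -> A -> R) pi (nu : S -> A -> R) : is_policy pi ->
  disc_return P rw g pi nu = rsum (fun s => rsum (fun a => occupancy pi nu s a * rw s a)).
Proof.
move=> Hpi; rewrite /disc_return.
have -> : (fun t => g ^ t * rsum (fun s => rsum (fun a => sa_dist P pi nu t s a * rw s a))) =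
    (fun t => rsum (fun s => rsum (fun a => g ^ t * sa_dist P pi nu t s a * rw s a))).
  apply: functional_extensionality => t; rewrite -rsumZ; apply: eq_rsum => s.
  by rewrite -rsumZ; apply: eq_rsum => a; ring.
rewrite (@series_sum_rsum _ _ (fun s => rsum (fun a => mass nu * Rabs (rw s a))) _ Hg);
  last by move=> s t; exact: rsum_sa_dist_dominated.
apply: eq_rsum => s.
rewrite (@series_sum_rsum _ _ (fun a => mass nu * Rabs (rw s a)) _ Hg);
  last by move=> a t; exact: sa_dist_dominated_by.
apply: eq_rsum => a; apply: (series_sumZr Hg) => t; exact: sa_dist_dominated.
Qed.

Lemma sa_dist_succ pi (nu : S -> A -> R) t :
  sa_dist P pi nu t.+1 = sa_dist P pi (sa_dist P pi nu 1) t.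
Proof.
elim: t => [|t IH] //.
transitivity (fun s' a' => rsum (fun s => rsum (fun a =>
  sa_dist P pi nu t.+1 s a * P s a s')) * pi s' a'); first by [].
by rewrite IH.
Qed.

Lemma occupancy_shift pi (nu : S -> A -> R) s a : is_policy pi ->
  occupancy pi nu s a = nu s a + g * occupancy pi (sa_dist P pi nu 1) s a.
Proof.
move=> Hpi; rewrite /occupancy (series_sum_shift Hg (fun t => sa_dist_dominated nu t s a Hpi)).
change (g ^ 0 * sa_dist P pi nu 0 s a) with (1 * nu s a); rewrite Rmult_1_l; congr (_ + _).
rewrite -(series_sumZ Hg (fun t => sa_dist_dominated (sa_dist P pi nu 1) t s a Hpi)); congr series_sum.
apply: functional_extensionality => t; rewrite -sa_dist_succ.
by change (g ^ t.+1) with (g * g ^ t); ring.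
Qed.

Lemma occupancy_flow pi (nu : S -> A -> R) s' a' : is_policy pi ->
  occupancy pi nu s' a' =
  nu s' a' + g * rsum (fun s => rsum (fun a => occupancy pi nu s a * P s a s')) * pi s' a'.
Proof.
move=> Hpi; rewrite /occupancy (series_sum_shift Hg (fun t => sa_dist_dominated nu t s' a' Hpi)).
rewrite /= Rmult_1_l; congr (_ + _).
set c := fun s a => P s a s' * pi s' a'.
have -> : (fun t => g * g ^ t *
      (rsum (fun s => rsum (fun a => sa_dist P pi nu t s a * P s a s')) * pi s' a')) =
    (fun t => g * rsum (fun s => rsum (fun a => g ^ t * sa_dist P pi nu t s a * c s a))).
  apply: functional_extensionality => t; rewrite Rmult_assoc -rsumZr -rsumZ; congr (g * _).
  by apply: eq_rsum => s; rewrite -rsumZr -rsumZ; apply: eq_rsum => a; rewrite /c; ring.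
have Hdom := fun t => rsum2_sa_dist_dominated nu c t Hpi.
rewrite (series_sumZ Hg Hdom) (series_sum_rsum Hg (fun s t => rsum_sa_dist_dominated nu (c s) t s Hpi)).
rewrite Rmult_assoc -rsumZr; congr (_ * _); apply: eq_rsum => s.
rewrite (series_sum_rsum Hg (fun a t => sa_dist_dominated_by nu (c s a) t s a Hpi)).
rewrite -rsumZr; apply: eq_rsum => a.
by rewrite (series_sumZr Hg (fun t => sa_dist_dominated nu t s a Hpi)) /c; ring.
Qed.

Lemma sa_dist_linear (I : finType) pi (nu : S -> A -> R) (c : I -> R) (nus : I -> S -> A -> R) :
  (forall s a, nu s a = rsum (fun i => c i * nus i s a)) ->
  forall t s a, sa_dist P pi nu t s a = rsum (fun i => c i * sa_dist P pi (nus i) t s a).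
Proof.
move=> Hnu; elim=> [|t IH] s' a' /=; first exact: Hnu.
set F := fun i => rsum (fun s => rsum (fun a => sa_dist P pi (nus i) t s a * P s a s')).
rewrite (@eq_rsum _ (fun i => c i * (F i * pi s' a')) (fun i => c i * F i * pi s' a'));
  last by move=> i; ring.
rewrite rsumZr; congr (_ * _).
rewrite (eq_rsum (g := fun i => rsum (fun s => rsum (fun a => c i * sa_dist P pi (nus i) t s a * P s a s')))); last first.
  move=> i; rewrite /F -rsumZ; apply: eq_rsum => s; rewrite -rsumZ; apply: eq_rsum => a; ring.
rewrite [RHS]exchange_rsum; apply: eq_rsum => s; rewrite [RHS]exchange_rsum; apply: eq_rsum => a.
by rewrite IH -rsumZr.
Qed.

Lemma occupancy_linear (I : finType) pi (nu : S -> A -> R) (c : I -> R)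
    (nus : I -> S -> A -> R) s a : is_policy pi ->
  (forall s a, nu s a = rsum (fun i => c i * nus i s a)) ->
  occupancy pi nu s a = rsum (fun i => c i * occupancy pi (nus i) s a).
Proof.
move=> Hpi Hnu; rewrite /occupancy.
have -> : (fun t => g ^ t * sa_dist P pi nu t s a) =
    (fun t => rsum (fun i => c i * (g ^ t * sa_dist P pi (nus i) t s a))).
  apply: functional_extensionality => t; rewrite (sa_dist_linear pi Hnu) -rsumZ.
  by apply: eq_rsum => i; ring.
rewrite (@series_sum_rsum _ _ (fun i => Rabs (c i) * mass (nus i)) _ Hg); last first.
  move=> i t; rewrite Rabs_mult Rmult_assoc.
  by apply: Rmult_le_compat_l; [exact: Rabs_pos | exact: sa_dist_dominated].
apply: eq_rsum => i; apply: (series_sumZ Hg) => t; exact: sa_dist_dominated.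
Qed.

Lemma occupancy_ge pi (nu : S -> A -> R) s a : is_policy pi ->
  (forall s a, 0 <= nu s a) -> nu s a <= occupancy pi nu s a.
Proof.
move=> Hpi Hnu.
have := sum_incr _ O _ (series_sum_cv Hg (fun t => sa_dist_dominated nu t s a Hpi)).
rewrite /= Rmult_1_l; apply=> n.
by apply: Rmult_le_pos; [apply: pow_le; lra | exact: sa_dist_ge0].
Qed.

End Occupancy.

Section ValueFunctions.
Variables (S A : finType) (P : S -> A -> S -> R) (rw : S -> A -> R) (rho0 : S -> R) (g : R).
Hypothesis HP : stochastic P.
Hypothesis Hg : 0 <= g < 1.
Hypothesis Hrho0 : forall s, 0 <= rho0 s.
Hypothesis Hrho1 : rsum rho0 = 1.

Lemma rho_occupancy pi s : is_policy pi ->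
  rho P rho0 g pi s = rsum (fun a => occupancy P g pi (fun s a => rho0 s * pi s a) s a).
Proof.
move=> Hpi; rewrite /rho.
have -> : (fun t => g ^ t * rsum (fun a => sa_dist P pi (fun s0 a0 => rho0 s0 * pi s0 a0) t s a)) =
    (fun t => rsum (fun a => g ^ t * sa_dist P pi (fun s0 a0 => rho0 s0 * pi s0 a0) t s a)).
  by apply: functional_extensionality => t; rewrite rsumZ.
apply: (series_sum_rsum (C := fun _ => mass (fun s0 a0 => rho0 s0 * pi s0 a0)) Hg) => a t.
exact: sa_dist_dominated.
Qed.

Lemma occupancy_rho pi s a : is_policy pi ->
  occupancy P g pi (fun s a => rho0 s * pi s a) s a = rho P rho0 g pi s * pi s a.
Proof.
move=> Hpi; set nu := fun s a => rho0 s * pi s a.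
have Hflow : forall s a, occupancy P g pi nu s a =
    (rho0 s + g * rsum (fun s0 => rsum (fun a0 => occupancy P g pi nu s0 a0 * P s0 a0 s))) * pi s a.
  by move=> s1 a1; rewrite occupancy_flow // /nu; ring.
rewrite rho_occupancy // (eq_rsum (fun a => Hflow s a)) rsumZ.
by case: Hpi => _ ->; rewrite Rmult_1_r; exact: Hflow.
Qed.

Lemma rho_flow pi s' : is_policy pi ->
  rho P rho0 g pi s' =
  rho0 s' + g * rsum (fun s => rsum (fun a => rho P rho0 g pi s * pi s a * P s a s')).
Proof.
move=> Hpi; have [_ Hpi1] := Hpi.
rewrite rho_occupancy // (eq_rsum (fun a => occupancy_flow HP Hg _ s' a Hpi)) rsumD rsumZ.
rewrite Hpi1 Rmult_1_r rsumZ Hpi1 Rmult_1_r.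
by congr (_ + g * _); apply: eq_rsum => s; apply: eq_rsum => a; rewrite occupancy_rho.
Qed.

Lemma rho0_le_rho pi s : is_policy pi -> rho0 s <= rho P rho0 g pi s.
Proof.
move=> Hpi; have [Hpi0 Hpi1] := Hpi; rewrite rho_occupancy //.
have -> : rho0 s = rsum (fun a => rho0 s * pi s a) by rewrite rsumZ Hpi1 Rmult_1_r.
apply: ler_rsum => a; apply: occupancy_ge => // s1 a1.
by apply: Rmult_le_pos; [exact: Hrho0 | exact: Hpi0].
Qed.

Lemma rho_ge0 pi s : is_policy pi -> 0 <= rho P rho0 g pi s.
Proof. by move=> Hpi; apply: Rle_trans (Hrho0 s) (rho0_le_rho s Hpi). Qed.

Lemma rho_mass pi : is_policy pi -> (1 - g) * rsum (fun s => rho P rho0 g pi s) = 1.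
Proof.
move=> Hpi; set m := rsum _.
suff : m = 1 + g * m by lra.
rewrite {1}/m (eq_rsum (fun s => rho_flow s Hpi)) rsumD rsumZ Hrho1; congr (1 + g * _).
rewrite (rsum_transition HP (fun s a => rho P rho0 g pi s * pi s a)).
exact: rsum_policy (fun s => rho P rho0 g pi s) Hpi.
Qed.

Lemma eta_rho pi : is_policy pi ->
  eta P rw rho0 g pi = rsum (fun s => rho P rho0 g pi s * rsum (fun a => pi s a * rw s a)).
Proof.
move=> Hpi; rewrite /eta disc_return_occupancy //; apply: eq_rsum => s.
by rewrite -rsumZ; apply: eq_rsum => a; rewrite occupancy_rho //; ring.
Qed.

Lemma Qf_bellman pi s a : is_policy pi ->
  Qf P rw g pi s a = rw s a + g * rsum (fun s' => P s a s' * Vf P rw g pi s').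
Proof.
move=> Hpi; rewrite /Qf disc_return_occupancy //.
set d := fun s0 a0 => if (s0 == s) && (a0 == a) then 1 else 0.
set nV := fun s' s0 a0 => if s0 == s' then pi s' a0 else 0.
have Hd : forall s1 a1, occupancy P g pi d s1 a1 =
    d s1 a1 + g * rsum (fun s' => P s a s' * occupancy P g pi (nV s') s1 a1).
  move=> s1 a1; rewrite occupancy_shift //; congr (_ + g * _).
  apply: occupancy_linear => // s2 a2 /=.
  rewrite /d rsum2_indicator -(rsum_pred1 (fun s' => P s a s' * pi s' a2) s2).
  by apply: eq_rsum => s'; rewrite /nV eq_sym; case: (_ == _); ring.
rewrite (eq_rsum (g := fun s1 => rsum (fun a1 => d s1 a1 * rw s1 a1) +
    g * rsum (fun a1 => rsum (fun s' => P s a s' * occupancy P g pi (nV s') s1 a1) * rw s1 a1))).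
  rewrite rsumD /d rsum2_indicator rsumZ rsum2_linear; congr (_ + g * _).
  by apply: eq_rsum => s'; rewrite /Vf disc_return_occupancy.
by move=> s1; rewrite -rsumZ -rsumD; apply: eq_rsum => a1; rewrite Hd; ring.
Qed.

Lemma Vf_Qf pi s : is_policy pi ->
  Vf P rw g pi s = rsum (fun a => pi s a * Qf P rw g pi s a).
Proof.
move=> Hpi; rewrite /Vf disc_return_occupancy //.
pose d := fun (a : A) (s0 : S) (a0 : A) => if (s0 == s) && (a0 == a) then 1 else 0.
have Hnu : forall s0 a0, (if s0 == s then pi s a0 else 0) = rsum (fun a => pi s a * d a s0 a0).
  move=> s0 a0; rewrite /d; case: (s0 == s) => /=.
    by rewrite -(rsum_indicator (pi s) a0); apply: eq_rsum => a; rewrite eq_sym; ring.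
  by rewrite (eq_rsum (g := fun _ => 0)) ?rsum0 // => a; ring.
rewrite (eq_rsum (fun s1 => eq_rsum (fun a1 =>
    f_equal (fun x => x * rw s1 a1) (occupancy_linear HP Hg s1 a1 Hpi Hnu)))).
by rewrite rsum2_linear; apply: eq_rsum => a; rewrite /Qf disc_return_occupancy.
Qed.

Lemma eta_Vf pi : is_policy pi -> eta P rw rho0 g pi = rsum (fun s => rho0 s * Vf P rw g pi s).
Proof.
move=> Hpi; rewrite /eta disc_return_occupancy //.
have Hnu : forall s0 a0, rho0 s0 * pi s0 a0 =
    rsum (fun s => rho0 s * (if s0 == s then pi s a0 else 0)).
  move=> s0 a0; rewrite -(rsum_pred1 (fun s => rho0 s * pi s a0) s0).
  by apply: eq_rsum => s; have [->|_] := eqVneq s s0; rewrite ?eqxx; ring.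
rewrite (eq_rsum (fun s1 => eq_rsum (fun a1 =>
    f_equal (fun x => x * rw s1 a1) (occupancy_linear HP Hg s1 a1 Hpi Hnu)))).
by rewrite rsum2_linear; apply: eq_rsum => s; rewrite /Vf disc_return_occupancy.
Qed.

Lemma rsum_policy_Adv pi s : is_policy pi -> rsum (fun a => pi s a * Adv P rw g pi s a) = 0.
Proof.
move=> Hpi; rewrite /Adv.
rewrite (eq_rsum (g := fun a => pi s a * Qf P rw g pi s a - Vf P rw g pi s * pi s a));
  last by move=> a; ring.
by rewrite rsumB rsumZ -Vf_Qf //; case: Hpi => _ ->; ring.
Qed.

Lemma policy_adv_self pi : is_policy pi -> policy_adv P rw rho0 g pi pi = 0.
Proof.
move=> Hpi; rewrite /policy_adv (eq_rsum (g := fun _ => 0)) ?rsum0 // => s.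
by rewrite rsum_policy_Adv //; ring.
Qed.

Lemma performance_difference pi pit : is_policy pi -> is_policy pit ->
  eta P rw rho0 g pit - eta P rw rho0 g pi =
  rsum (fun s => rho P rho0 g pit s * rsum (fun a => pit s a * Adv P rw g pi s a)).
Proof.
move=> Hpi Hpit; have [_ Hpit1] := Hpit.
set V := Vf P rw g pi; set rt := rho P rho0 g pit.
set B := fun s => rsum (fun a => pit s a * rsum (fun s' => P s a s' * V s')).
have Hflow : rsum (fun s' => rt s' * V s') - rsum (fun s' => rho0 s' * V s') =
    g * rsum (fun s => rt s * B s).
  rewrite -rsumB (eq_rsum (g := fun s' =>
      rsum (fun s => rsum (fun a => g * (rt s * pit s a * P s a s' * V s'))))); last first.
    move=> s'; rewrite /rt rho_flow // -/rt.
    transitivity ((g * V s') * rsum (fun s => rsum (fun a => rt s * pit s a * P s a s'))); first ring.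
    by rewrite -rsumZ; apply: eq_rsum => s; rewrite -rsumZ; apply: eq_rsum => a; ring.
  rewrite -rsumZ exchange_rsum; apply: eq_rsum => s; rewrite exchange_rsum /B -!rsumZ.
  by apply: eq_rsum => a; rewrite -!rsumZ; apply: eq_rsum => s'; ring.
have Hadv : forall s, rsum (fun a => pit s a * Adv P rw g pi s a) =
    rsum (fun a => pit s a * rw s a) + g * B s - V s.
  move=> s; rewrite /Adv (eq_rsum (g := fun a =>
      (pit s a * rw s a + g * (pit s a * rsum (fun s' => P s a s' * V s'))) - V s * pit s a)).
    by rewrite rsumB rsumD !rsumZ Hpit1 /B; ring.
  by move=> a; rewrite Qf_bellman // -/V; ring.
rewrite (eq_rsum (fun s => f_equal (fun x => rt s * x) (Hadv s))).
rewrite (eq_rsum (g := fun s => (rt s * rsum (fun a => pit s a * rw s a) + g * (rt s * B s)) -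
    rt s * V s)); last by move=> s; ring.
by rewrite rsumB rsumD rsumZ eta_rho // eta_Vf // -/rt -/V; lra.
Qed.

(* Subtracting the flow equations of [rho_pit] and [rho_pi] and taking absolute values. *)
Lemma rho_l1_diff_le pi pit : is_policy pi -> is_policy pit ->
  (1 - g) * rsum (fun s => Rabs (rho P rho0 g pit s - rho P rho0 g pi s)) <=
  2 * g * exp_tv P rho0 g pi pit.
Proof.
move=> Hpi Hpit; have [HP0 _] := HP; have [Hpit0 Hpit1] := Hpit.
set rt := rho P rho0 g pit; set r := rho P rho0 g pi.
have Hr : forall s, 0 <= r s by move=> s; exact: rho_ge0.
set F := fun s a => Rabs (rt s - r s) * pit s a + r s * Rabs (pit s a - pi s a).
have Hdiff : forall s', rt s' - r s' = g * rsum (fun s => rsum (fun a =>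
    ((rt s - r s) * pit s a + r s * (pit s a - pi s a)) * P s a s')).
  move=> s'; rewrite {1}/rt {1}/r (rho_flow s' Hpit) (rho_flow s' Hpi) -/rt -/r.
  have -> : rsum (fun s => rsum (fun a =>
      ((rt s - r s) * pit s a + r s * (pit s a - pi s a)) * P s a s')) =
    rsum (fun s => rsum (fun a => rt s * pit s a * P s a s')) -
    rsum (fun s => rsum (fun a => r s * pi s a * P s a s')).
    by rewrite -rsumB; apply: eq_rsum => s; rewrite -rsumB; apply: eq_rsum => a; ring.
  ring.
have Hle : rsum (fun s' => Rabs (rt s' - r s')) <= g * rsum (fun s => rsum (fun a => F s a)).
  rewrite -(rsum_transition HP F) -rsumZ; apply: ler_rsum => s'.
  rewrite Hdiff Rabs_mult (Rabs_pos_eq g); last lra.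
  apply: Rmult_le_compat_l; first lra.
  apply: Rle_trans (ler_abs_rsum _) _; apply: ler_rsum => s.
  apply: Rle_trans (ler_abs_rsum _) _; apply: ler_rsum => a.
  rewrite Rabs_mult (Rabs_pos_eq (P s a s')) //; apply: Rmult_le_compat_r => //.
  apply: Rle_trans (Rabs_triang _ _) _.
  by rewrite /F !Rabs_mult (Rabs_pos_eq (pit s a)) // (Rabs_pos_eq (r s)) //; exact: Rle_refl.
have HF : rsum (fun s => rsum (fun a => F s a)) =
    rsum (fun s => Rabs (rt s - r s)) + 2 * exp_tv P rho0 g pi pit.
  rewrite /exp_tv -/r -rsumZ -rsumD; apply: eq_rsum => s.
  by rewrite rsumD !rsumZ Hpit1 dTV_sym; ring.
by rewrite HF in Hle; lra.
Qed.

Definition mix_policy (t : R) (pi pi' : S -> A -> R) (s : S) (a : A) : R :=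
  (1 - t) * pi s a + t * pi' s a.

Lemma is_policy_mix t pi pi' : 0 <= t <= 1 -> is_policy pi -> is_policy pi' ->
  is_policy (mix_policy t pi pi').
Proof.
move=> Ht [Hpi0 Hpi1] [Hps0 Hps1]; split.
  by move=> s a; rewrite /mix_policy; have := Hpi0 s a; have := Hps0 s a; nra.
by move=> s; rewrite /mix_policy rsumD !rsumZ Hpi1 Hps1; ring.
Qed.

Lemma policy_adv_mix t pi pi' : is_policy pi ->
  policy_adv P rw rho0 g pi (mix_policy t pi pi') = t * policy_adv P rw rho0 g pi pi'.
Proof.
move=> Hpi; rewrite /policy_adv -rsumZ; apply: eq_rsum => s.
rewrite (eq_rsum (g := fun a => (1 - t) * (pi s a * Adv P rw g pi s a) +
    t * (pi' s a * Adv P rw g pi s a))); last by move=> a; rewrite /mix_policy; ring.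
by rewrite rsumD !rsumZ rsum_policy_Adv //; ring.
Qed.

Lemma exp_tv_mix_le t pi pi' : 0 <= t -> is_policy pi -> is_policy pi' ->
  exp_tv P rho0 g pi (mix_policy t pi pi') <= t / (1 - g).
Proof.
move=> Ht Hpi Hps; have [Hpi0 Hpi1] := Hpi; have [Hps0 Hps1] := Hps.
have -> : t / (1 - g) = rsum (fun s => rho P rho0 g pi s * t).
  have Hm := rho_mass Hpi; rewrite rsumZr; set m := rsum _ in Hm *.
  have -> : m = / (1 - g) by apply: (Rmult_eq_reg_l (1 - g)); [rewrite Hm Rinv_r //|]; lra.
  by field; lra.
apply: ler_rsum => s; apply: Rmult_le_compat_l; first exact: rho_ge0.
have -> : dTV (pi s) (mix_policy t pi pi' s) = t * dTV (pi s) (pi' s).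
  rewrite /dTV (eq_rsum (g := fun a => t * Rabs (pi s a - pi' s a))) ?rsumZ; first ring.
  move=> a; rewrite /mix_policy.
  by rewrite (_ : _ - _ = t * (pi s a - pi' s a)); [rewrite Rabs_mult Rabs_pos_eq | ring].
have := dTV_le1 (Hpi0 s) (Hps0 s) (Hpi1 s) (Hps1 s); have := dTV_ge0 (pi s) (pi' s); nra.
Qed.

(* The mixture of [pi] with a maximiser of the policy advantage in proportion
   [min(1, delta (1 - g))] is feasible for the trust-region problem. *)
Lemma trust_region_gain pi pit Astar delta : is_policy pi -> 0 < delta ->
  (exists pi', is_policy pi' /\ policy_adv P rw rho0 g pi pi' = Astar) ->
  (forall pi', is_policy pi' -> exp_tv P rho0 g pi pi' <= delta ->
     surrogate P rw rho0 g pi pi' <= surrogate P rw rho0 g pi pit) ->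
  Rmin 1 (delta * (1 - g)) * Astar <= policy_adv P rw rho0 g pi pit.
Proof.
move=> Hpi Hdelta [ps [Hps <-]] Hopt; set t := Rmin 1 (delta * (1 - g)).
have Ht0 : 0 < t by apply: Rmin_glb_lt; nra.
have Ht1 : t <= 1 := Rmin_l _ _.
have Htd : t <= delta * (1 - g) := Rmin_r _ _.
have Hfeas : exp_tv P rho0 g pi (mix_policy t pi ps) <= delta.
  apply: Rle_trans (exp_tv_mix_le (Rlt_le _ _ Ht0) Hpi Hps) _.
  rewrite (_ : delta = delta * (1 - g) / (1 - g)); last by field; lra.
  by apply: Rmult_le_compat_r => //; apply/Rlt_le/Rinv_0_lt_compat; lra.
have := Hopt _ (is_policy_mix (conj (Rlt_le _ _ Ht0) Ht1) Hpi Hps) Hfeas.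
by rewrite /surrogate -!/(policy_adv P rw rho0 g pi _) policy_adv_mix //; lra.
Qed.

Lemma p0_abs_state_adv_le pi pit delta p0 Abar s : is_policy pi ->
  (forall s, p0 <= rho0 s) -> 0 <= p0 -> 0 <= Abar ->
  (forall s a, Rabs (Adv P rw g pi s a) <= Abar) ->
  exp_tv P rho0 g pi pit <= delta ->
  p0 * Rabs (rsum (fun a => pit s a * Adv P rw g pi s a)) <= 2 * Abar * delta.
Proof.
move=> Hpi Hp0 Hp0pos HAbar0 HAbar Hfeas.
have Hd := dTV_ge0 (pi s) (pit s).
have Htv : rho P rho0 g pi s * dTV (pi s) (pit s) <= delta.
  apply: Rle_trans Hfeas; apply: (@ler_term_rsum _ (fun s => rho P rho0 g pi s * dTV (pi s) (pit s))).
  by move=> x; apply: Rmult_le_pos; [exact: rho_ge0 | exact: dTV_ge0].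
have Hp0rho : p0 <= rho P rho0 g pi s by apply: Rle_trans (Hp0 s) (rho0_le_rho s Hpi).
have := abs_rsum_centered_le (pit s) (rsum_policy_Adv s Hpi) (HAbar s).
set x := Rabs _ => Hx; have Hx0 : 0 <= x := Rabs_pos _.
have : p0 * dTV (pi s) (pit s) <= rho P rho0 g pi s * dTV (pi s) (pit s).
  exact: Rmult_le_compat_r.
by nra.
Qed.

Lemma improvement_gap_ge pi pit delta p0 Abar : is_policy pi -> is_policy pit ->
  (forall s, p0 <= rho0 s) -> 0 <= p0 -> 0 <= Abar ->
  (forall s a, Rabs (Adv P rw g pi s a) <= Abar) ->
  exp_tv P rho0 g pi pit <= delta ->
  p0 * (1 - g) * (eta P rw rho0 g pit - eta P rw rho0 g pi - policy_adv P rw rho0 g pi pit)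
    >= - (4 * Abar * g * delta ^ 2).
Proof.
move=> Hpi Hpit Hp0 Hp0pos HAbar0 HAbar Hfeas.
set rr := rho P rho0 g pi; set rt := rho P rho0 g pit.
set Ab := fun s => rsum (fun a => pit s a * Adv P rw g pi s a).
have HAb s : p0 * Rabs (Ab s) <= 2 * Abar * delta :=
  p0_abs_state_adv_le s Hpi Hp0 Hp0pos HAbar0 HAbar Hfeas.
have Hgap : eta P rw rho0 g pit - eta P rw rho0 g pi - policy_adv P rw rho0 g pi pit =
    rsum (fun s => (rt s - rr s) * Ab s).
  by rewrite performance_difference // /policy_adv -rsumB; apply: eq_rsum => s; rewrite /rt /rr /Ab; ring.
have Hterm : - (2 * Abar * delta * rsum (fun s => Rabs (rt s - rr s))) <=
    p0 * rsum (fun s => (rt s - rr s) * Ab s).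
  rewrite -rsumZ -rsumZ -rsumN; apply: ler_rsum => s.
  have := Rle_abs (- ((rt s - rr s) * Ab s)); rewrite Rabs_Ropp Rabs_mult => Habs.
  have : Rabs (rt s - rr s) * (p0 * Rabs (Ab s)) <= Rabs (rt s - rr s) * (2 * Abar * delta).
    by apply: Rmult_le_compat_l; [exact: Rabs_pos | exact: HAb].
  by nra.
have Hdelta : 0 <= delta.
  apply: Rle_trans Hfeas; apply: rsum_ge0 => s.
  by apply: Rmult_le_pos; [exact: rho_ge0 | exact: dTV_ge0].
have Hl1 := rho_l1_diff_le Hpi Hpit; rewrite -/rt -/rr in Hl1.
have : 2 * Abar * delta * ((1 - g) * rsum (fun s => Rabs (rt s - rr s))) <=
    2 * Abar * delta * (2 * g * delta).
  apply: Rmult_le_compat_l; first nra.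
  by apply: Rle_trans Hl1 _; apply: Rmult_le_compat_l; lra.
by rewrite Hgap; simpl; nra.
Qed.

End ValueFunctions.

Lemma ratio_ge_Rmin (N D p0 g K Ast d : R) :
  0 < p0 <= 1 -> 0 <= g < 1 -> 0 < Ast -> 0 < d -> 0 <= K ->
  Rmin 1 (d * (1 - g)) * Ast <= D ->
  p0 * (1 - g) * (N - D) >= - (K * d ^ 2) ->
  N / D >= Rmin (1 - K * d ^ 2 / (p0 ^ 2 * (1 - g) ^ 2 * Ast))
                (1 - K * d / (p0 ^ 2 * (1 - g) ^ 3 * Ast)).
Proof.
move=> Hp0 Hg HAst Hd HK HD Hgap; set c := p0 * (1 - g) in Hgap.
have Hc : 0 < c <= 1.
  rewrite /c; split; first by apply: Rmult_lt_0_compat; lra.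
  have : p0 * (1 - g) <= 1 * 1 by apply: Rmult_le_compat; lra.
  lra.
have HDpos : 0 < D.
  by apply: Rlt_le_trans HD; apply: Rmult_lt_0_compat => //; apply: Rmin_glb_lt; nra.
have HKd : 0 <= K * d ^ 2 by apply: Rmult_le_pos => //; apply: pow_le; lra.
have Hratio : N / D >= 1 - K * d ^ 2 / (c * D).
  have -> : N / D = 1 + c * (N - D) / (c * D) by field; lra.
  have : - (K * d ^ 2) / (c * D) <= c * (N - D) / (c * D).
    by apply: Rmult_le_compat_r; [apply/Rlt_le/Rinv_0_lt_compat; nra | lra].
  by rewrite /Rdiv Ropp_mult_distr_l; lra.
have Hdiv : forall a, 0 < a -> a <= c * D -> K * d ^ 2 / (c * D) <= K * d ^ 2 / a.
  by move=> a Ha HaD; apply: Rmult_le_compat_l => //; exact: Rinv_le_contravar.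
case: (Rle_dec 1 (d * (1 - g))) => Hcase.
- rewrite Rmin_left // Rmult_1_l in HD.
  apply: Rge_trans (Rle_ge _ _ (Rmin_l _ _)).
  have -> : p0 ^ 2 * (1 - g) ^ 2 * Ast = c * c * Ast by rewrite /c; ring.
  have Hpos : 0 < c * c * Ast by apply: Rmult_lt_0_compat; nra.
  have Hle : c * c * Ast <= c * D.
    by rewrite Rmult_assoc; apply: Rmult_le_compat_l; nra.
  have := Hdiv _ Hpos Hle; lra.
- rewrite Rmin_right in HD; last lra.
  apply: Rge_trans (Rle_ge _ _ (Rmin_r _ _)).
  have -> : K * d / (p0 ^ 2 * (1 - g) ^ 3 * Ast) = K * d ^ 2 / (c * c * (d * (1 - g) * Ast)).
    by rewrite /c; field; repeat split; lra.
  have Hdg : 0 < d * (1 - g) * Ast by apply: Rmult_lt_0_compat; nra.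
  have Hpos : 0 < c * c * (d * (1 - g) * Ast) by apply: Rmult_lt_0_compat; nra.
  have Hle : c * c * (d * (1 - g) * Ast) <= c * D.
    by rewrite Rmult_assoc; apply: Rmult_le_compat_l; nra.
  have := Hdiv _ Hpos Hle; lra.
Qed.

Theorem mainTheorem3 (S A : finType) (P : S -> A -> S -> R) (rw : S -> A -> R)
  (rho0 : S -> R) (gamma : R)
  (Hmdp : valid_mdp P rw rho0 gamma)
  (pi : S -> A -> R) (Hpi : is_policy pi)
  (Astar : R)
  (HAstar_ub : forall pi', is_policy pi' -> policy_adv P rw rho0 gamma pi pi' <= Astar)
  (HAstar_att : exists pi', is_policy pi' /\ policy_adv P rw rho0 gamma pi pi' = Astar)
  (HApos : 0 < Astar)
  (delta : R) (Hdelta : 0 < delta)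
  (pit : S -> A -> R) (Hpit : is_policy pit)
  (Hfeas : exp_tv P rho0 gamma pi pit <= delta)
  (Hopt : forall pi', is_policy pi' -> exp_tv P rho0 gamma pi pi' <= delta ->
            surrogate P rw rho0 gamma pi pi' <= surrogate P rw rho0 gamma pi pit)
  (p0 : R) (Hp0_lb : forall s, p0 <= rho0 s) (Hp0_att : exists s, rho0 s = p0)
  (Abar : R) (HAbar_ub : forall s a, Rabs (Adv P rw gamma pi s a) <= Abar)
  (HAbar_att : exists s a, Rabs (Adv P rw gamma pi s a) = Abar) :
  let r := (eta P rw rho0 gamma pit - eta P rw rho0 gamma pi) /
           (surrogate P rw rho0 gamma pi pit - surrogate P rw rho0 gamma pi pi) in
  r >= Rmin (1 - 4 * Abar * gamma * delta ^ 2 /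
                   (p0 ^ 2 * (1 - gamma) ^ 2 * Astar))
            (1 - 4 * Abar * gamma * delta /
                   (p0 ^ 2 * (1 - gamma) ^ 3 * Astar)).
Proof.
move=> r; rewrite {}/r.
have [HP0 [HP1 [Hrho0 [Hrho1 [_ Hg]]]]] := Hmdp.
have HP : stochastic P := conj HP0 HP1.
have Hg' : 0 <= gamma < 1 by lra.
have Hrho0' : forall s, 0 <= rho0 s by move=> s; exact: Rlt_le.
have [s0 Hs0] := Hp0_att.
have Hp0 : 0 < p0 <= 1 by rewrite -Hs0 -Hrho1; split; [exact: Hrho0 | exact: ler_term_rsum].
have HAbar0 : 0 <= Abar by have [s [a <-]] := HAbar_att; exact: Rabs_pos.
have -> : surrogate P rw rho0 gamma pi pit - surrogate P rw rho0 gamma pi pi =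
    policy_adv P rw rho0 gamma pi pit.
  by rewrite /surrogate -!/(policy_adv P rw rho0 gamma pi _) policy_adv_self //; ring.
apply: ratio_ge_Rmin => //; first by apply: Rmult_le_pos; lra.
  exact (trust_region_gain HP Hg' Hrho0' Hrho1 Hpi Hdelta HAstar_att Hopt).
exact (improvement_gap_ge HP Hg' Hrho0' Hpi Hpit Hp0_lb (Rlt_le _ _ (proj1 Hp0)) HAbar0 HAbar_ub Hfeas).
Qed.
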